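(* Define $A_0=E_1$ and $B_0=E_2F_3q^{-G_1-G_3}-q^{-1}F_3q^{-G_1-G_3}E_2$, let $X=A_0B_0-q^{-2}B_0A_0$, and recursively for $k\ge1$ $$A_k=[2]_q^{-1}(A_{k-1}X-XA_{k-1}),\qquad B_k=[2]_q^{-1}(XB_{k-1}-B_{k-1}X).$$ Let $\mathcal E_\alpha(\zeta)=\sum_{k\ge0}A_k\zeta^k$, $\mathcal E_{\delta-\alpha}(\zeta)=\sum_{k\ge0}B_k\zeta^k$ and $\mathcal E'_\alpha(\zeta)=\zeta\bigl(\mathcal E_\alpha(\zeta)B_0-q^{-2}B_0\mathcal E_\alpha(\zeta)\bigr)$. Then in $\mathrm U_q(\mathfrak{gl}_3)[[\zeta]]$: (i) $B_0=F_1q^{-G_1-G_2}$; (ii) $\mathcal E_\alpha(\zeta)=\kappa_q^{-1}N'_{21}N'_{11}(-q^{-2}\zeta)^{-1}$; (iii) $\mathcal E_{\delta-\alpha}(\zeta)=\kappa_q^{-1}q^{-1}N'_{11}(-q^{-2}\zeta)^{-1}N'_{12}$; (iv) $1+\kappa_q\mathcal E'_\alpha(\zeta)=N'_{11}(-q^{-2}\zeta)^{-1}N''_{22}(-q^{-2}\zeta)$.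
   Context: Setting: $\hbar\in\mathbb C$, $q=e^\hbar$, $q^2\neq1$, $\kappa_q=q-q^{-1}$, $[\nu]_q=(q^\nu-q^{-\nu})/\kappa_q$ (so $[2]_q=q+q^{-1}$, assumed nonzero). Let $\mathfrak g=\mathbb CG_1\oplus\mathbb CG_2\oplus\mathbb CG_3$ and define linear forms $\alpha_1,\alpha_2$ on $\mathfrak g$ by $\alpha_1(G_1)=1,\alpha_1(G_2)=-1,\alpha_1(G_3)=0$, $\alpha_2(G_1)=0,\alpha_2(G_2)=1,\alpha_2(G_3)=-1$; put $H_1=G_1-G_2$, $H_2=G_2-G_3$. $\mathrm U_q(\mathfrak{gl}_3)$ is the unital associative $\mathbb C$-algebra generated by $E_1,E_2,F_1,F_2$ and symbols $q^X$, $X\in\mathfrak g$, with relations $q^0=1$, $q^{X_1}q^{X_2}=q^{X_1+X_2}$, $q^XE_iq^{-X}=q^{\alpha_i(X)}E_i$, $q^XF_iq^{-X}=q^{-\alpha_i(X)}F_i$, $[E_i,F_j]=\delta_{ij}(q^{H_i}-q^{-H_i})/\kappa_q$, and for $i\ne j$ the $q$-Serre relations $E_i^2E_j-[2]_qE_iE_jE_i+E_jE_i^2=0$, $F_i^2F_j-[2]_qF_iF_jF_i+F_jF_i^2=0$. For $\nu\in\mathbb C$ one writes $q^{X+\nu}=q^\nu q^X$. Further $E_3=E_1E_2-q^{-1}E_2E_1$, $F_3=F_2F_1-qF_1F_2$. Matrix entries: in $\mathrm U_q(\mathfrak{gl}_3)[[\zeta]]$ ($\zeta$ a formal variable; series with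 constant term $1$ are invertible) let $N'_{11}(\zeta)=1-\zeta q^{-2G_1}$, $N'_{22}(\zeta)=1-\zeta q^{-2G_2}$, $N'_{33}(\zeta)=1-\zeta q^{-2G_3}$, $N'_{12}=\kappa_q qF_1q^{-G_1-G_2}$, $N'_{23}=\kappa_q qF_2q^{-G_2-G_3}$, $N'_{13}=\kappa_q qF_3q^{-G_1-G_3}$, $N'_{21}=\kappa_qE_1$, $N'_{32}=\kappa_qE_2$, $N'_{31}=\kappa_qE_3$; and $N''_{22}(\zeta)=N'_{22}(\zeta)-\zeta N'_{21}N'_{11}(\zeta)^{-1}N'_{12}$, $N''_{23}(\zeta)=N'_{23}-N'_{21}N'_{11}(\zeta)^{-1}N'_{13}$, $N''_{32}(\zeta)=N'_{32}-\zeta N'_{31}N'_{11}(\zeta)^{-1}N'_{12}$, $N''_{33}(\zeta)=N'_{33}(\zeta)-\zeta N'_{31}N'_{11}(\zeta)^{-1}N'_{13}$, $N'''_{33}(\zeta)=N''_{33}(\zeta)-\zeta N''_{32}(\zeta)N''_{22}(\zeta)^{-1}N''_{23}(\zeta)$. For $c\in\mathbb C$, $N(c\zeta)$ denotes substitution $\zeta\mapsto c\zeta$. (Interpretation: $A_k$, $B_k$ are the images under Jimbo's evaluation homomorphism of the Khoroshkin–Tolstoy root vectors $e_{\alpha+k\delta}$, $e_{(\delta-\alpha)+k\delta}$ of $\mathrm U_q(\mathcal L(\mathfrak{sl}_3))$; this is not needed for the statement.) *)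

From HB Require Import structures.
From mathcomp Require Import all_boot all_order all_algebra.
Set Implicit Arguments. Unset Strict Implicit. Unset Printing Implicit Defensive.
Import Order.TTheory GRing.Theory.
Local Open Scope ring_scope.

Section PowerSeries.
Variable R : nzRingType.

Definition ps := nat -> R.

Definition psC (a : R) : ps := fun n => if n is 0%N then a else 0.
Definition ps1 : ps := psC 1.
Definition psadd (f g : ps) : ps := fun n => f n + g n.
Definition psopp (f : ps) : ps := fun n => - f n.
Definition psmul (f g : ps) : ps :=
  fun n => \sum_(i < n.+1) f i * g (n - i)%N.
Definition psshift (f : ps) : ps := fun n => if n is n'.+1 then f n' else 0.

(* inverse of a series with constant term 1: b_0 = 1,
   b_n = - sum_{k<n} a_{n-k} b_k  (so that a * b = 1) *)
Fixpoint psinv_seq (a : ps) (n : nat) : seq R :=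
  match n with
  | 0 => [:: 1]
  | n'.+1 => let s := psinv_seq a n' in
             rcons s (- \sum_(k < n'.+1) a (n'.+1 - k)%N * nth 0 s k)
  end.
Definition psinv (a : ps) : ps := fun n => nth 0 (psinv_seq a n) n.
End PowerSeries.

Section PowerSeriesAlg.
Variables (K : fieldType) (A : algType K).
Definition psscale (c : K) (f : ps A) : ps A := fun n => c *: f n.
Definition pssubst (c : K) (f : ps A) : ps A := fun n => (c ^+ n) *: f n.
End PowerSeriesAlg.

(* [e] plays the role of nu |-> q^nu = exp(hbar nu); q := e 1.
   [Q x1 x2 x3] plays the role of q^X for X = x1 G1 + x2 G2 + x3 G3. *)
Section Uq.
Variables (K : fieldType) (A : algType K).
Variable e : K -> K.
Variables (E1 E2 F1 F2 : A) (Q : K -> K -> K -> A).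

Definition qq : K := e 1.
Definition kappa : K := qq - qq^-1.
Definition qint2 : K := qq + qq^-1.

Definition is_qexp : Prop :=
  e 0 = 1 /\ forall x y, e (x + y) = e x * e y.

Definition Uqgl3_rel : Prop :=
  [/\ Q 0 0 0 = 1,
      (forall x1 x2 x3 y1 y2 y3,
          Q (x1 + y1) (x2 + y2) (x3 + y3) = Q x1 x2 x3 * Q y1 y2 y3),
      (forall x1 x2 x3,
         [/\ Q x1 x2 x3 * E1 * Q (- x1) (- x2) (- x3) = e (x1 - x2) *: E1,
             Q x1 x2 x3 * E2 * Q (- x1) (- x2) (- x3) = e (x2 - x3) *: E2,
             Q x1 x2 x3 * F1 * Q (- x1) (- x2) (- x3) = e (- (x1 - x2)) *: F1 &
             Q x1 x2 x3 * F2 * Q (- x1) (- x2) (- x3) = e (- (x2 - x3)) *: F2]),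
      [/\ E1 * F1 - F1 * E1 = kappa^-1 *: (Q 1 (-1) 0 - Q (-1) 1 0),
          E2 * F2 - F2 * E2 = kappa^-1 *: (Q 0 1 (-1) - Q 0 (-1) 1),
          E1 * F2 - F2 * E1 = 0 &
          E2 * F1 - F1 * E2 = 0] &
      [/\ E1 ^+ 2 * E2 - qint2 *: (E1 * E2 * E1) + E2 * E1 ^+ 2 = 0,
          E2 ^+ 2 * E1 - qint2 *: (E2 * E1 * E2) + E1 * E2 ^+ 2 = 0,
          F1 ^+ 2 * F2 - qint2 *: (F1 * F2 * F1) + F2 * F1 ^+ 2 = 0 &
          F2 ^+ 2 * F1 - qint2 *: (F2 * F1 * F2) + F1 * F2 ^+ 2 = 0]].

Definition E3 : A := E1 * E2 - qq^-1 *: (E2 * E1).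
Definition F3 : A := F2 * F1 - qq *: (F1 * F2).

Definition N'11 : ps A := fun n =>
  match n with 0 => 1 | 1 => - Q (-2) 0 0 | _ => 0 end.
Definition N'22 : ps A := fun n =>
  match n with 0 => 1 | 1 => - Q 0 (-2) 0 | _ => 0 end.
Definition N'33 : ps A := fun n =>
  match n with 0 => 1 | 1 => - Q 0 0 (-2) | _ => 0 end.
Definition N'12 : A := kappa *: (qq *: (F1 * Q (-1) (-1) 0)).
Definition N'23 : A := kappa *: (qq *: (F2 * Q 0 (-1) (-1))).
Definition N'13 : A := kappa *: (qq *: (F3 * Q (-1) 0 (-1))).
Definition N'21 : A := kappa *: E1.
Definition N'32 : A := kappa *: E2.
Definition N'31 : A := kappa *: E3.

Definition N''22 : ps A :=
  psadd N'22 (psopp (psshift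
    (psmul (psmul (psC N'21) (psinv N'11)) (psC N'12)))).

Definition A0 : A := E1.
Definition B0 : A :=
  E2 * F3 * Q (-1) 0 (-1) - qq^-1 *: (F3 * Q (-1) 0 (-1) * E2).
Definition Xel : A := A0 * B0 - qq^-2 *: (B0 * A0).
Fixpoint Ak (k : nat) : A :=
  if k is k'.+1 then qint2^-1 *: (Ak k' * Xel - Xel * Ak k') else A0.
Fixpoint Bk (k : nat) : A :=
  if k is k'.+1 then qint2^-1 *: (Xel * Bk k' - Bk k' * Xel) else B0.

Definition Ealpha : ps A := Ak.
Definition Edeltaalpha : ps A := Bk.
Definition E'alpha : ps A :=
  psshift (fun n => Ealpha n * B0 - qq^-2 *: (B0 * Ealpha n)).
End Uq.

From HB Require Import structures.
From mathcomp Require Import all_boot all_order all_algebra ring.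
Set Implicit Arguments. Unset Strict Implicit. Unset Printing Implicit Defensive.
Import GRing.Theory.
Local Open Scope ring_scope.

(* The proof is a computation inside the subalgebra generated by E_1, F_1, the
   Cartan elements q^(+-H_1) and P = q^(-G_1-G_2), which commutes with E_1, F_1.

   For U_q(gl_3) we then show: (i) B_0 = F_1 P (from [E_2, F_3] = F_1 q^(-H_2));
   X = [E_1, F_1]_(q^-2) P satisfies [E_1, X] = [2] (-q^-2) E_1 M and
   [X, F_1] = [2] (-q^-2) M F_1 with M = q^(-2G_1), and commutes with M and P;
   hence A_n = E_1 w^n and B_n = w^n F_1 P with w = -q^-2 M, which gives (ii) and
   (iii).  For (iv) the coefficients of 1 + kappa E'_alpha are computed in closed
   form and shown to satisfy the recursion characterising
   N'_11(-q^-2 zeta)^-1 N''_22(-q^-2 zeta). *)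

Lemma subrACA (V : zmodType) (a b c d : V) : (a - b) - (c - d) = (a - c) - (b - d).
Proof. by rewrite !opprB addrACA [RHS]addrACA (addrC (- b)). Qed.

Section QCommutators.
Variables (R : comPzRingType) (A : algType R).
Implicit Types (a b m s : R) (k p x y z : A).

Definition qbr m x y : A := x * y - m *: (y * x).
Definition br x y : A := x * y - y * x.

Definition qcomm a k x : Prop := k * x = a *: (x * k).

Lemma qcomm1 k x : qcomm 1 k x -> k * x = x * k.
Proof. by rewrite /qcomm scale1r. Qed.

Lemma qcomm_conj a k k' x : k' * k = 1 -> k * x * k' = a *: x -> qcomm a k x.
Proof. by move=> hk hx; rewrite /qcomm -[k * x]mulr1 -hk mulrA hx scalerAl. Qed.

Lemma qcommM a b k x y : qcomm a k x -> qcomm b k y -> qcomm (a * b) k (x * y).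
Proof.
move=> hx hy; rewrite /qcomm mulrA hx -scalerAl -[x * k * y]mulrA hy.
by rewrite scalerAr scalerA -scalerAr mulrA.
Qed.

Lemma qcommZ a s k x : qcomm a k x -> qcomm a (s *: k) x.
Proof. by move=> hx; rewrite /qcomm -scalerAl hx -scalerAr !scalerA mulrC. Qed.

Lemma qcommX a n k x : qcomm a k x -> qcomm (a ^+ n) (k ^+ n) x.
Proof.
move=> hx; elim: n => [|n IH]; first by rewrite /qcomm !expr0 mulr1 mul1r scale1r.
rewrite /qcomm !exprSr -mulrA hx -scalerAr.
by rewrite [in LHS]mulrA IH -scalerAl scalerA -mulrA mulrC.
Qed.

Lemma qcommBZ a s t k x y :
  qcomm a k x -> qcomm a k y -> qcomm a k (s *: x - t *: y).
Proof.
move=> hx hy; rewrite /qcomm mulrBr -!scalerAr hx hy !scalerA mulrBl -!scalerAl.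
by rewrite scalerBr !scalerA [s * a]mulrC [t * a]mulrC.
Qed.

Lemma qcomm_qbr a b m k x y :
  qcomm a k x -> qcomm b k y -> qcomm (a * b) k (qbr m x y).
Proof.
move=> hx hy; have hxy := qcommM hx hy; have hyx := qcommM hy hx.
rewrite /qcomm /qbr mulrBr mulrBl -scalerAr hxy hyx -scalerAl !scalerA.
by rewrite scalerBr scalerA [b * a]mulrC [m * _]mulrC.
Qed.

Lemma qbr_qcomm_l a m k x : qcomm a k x -> qbr m x k = (1 - m * a) *: (x * k).
Proof. by move=> hx; rewrite /qbr hx scalerA scalerBl scale1r. Qed.

Lemma qbr_qcomm_r a m k x : qcomm a k x -> qbr m k x = (a - m) *: (x * k).
Proof. by move=> hx; rewrite /qbr hx scalerBl. Qed.

Lemma qbr_br m x y : qbr m x y = (1 - m) *: (x * y) + m *: br x y.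
Proof. by rewrite /qbr /br scalerBl scale1r scalerBr subrKA. Qed.

Lemma qbrBl m x y z : qbr m (x - y) z = qbr m x z - qbr m y z.
Proof. by rewrite /qbr mulrBl mulrBr scalerBr subrACA. Qed.

Lemma qbrZl m s x z : qbr m (s *: x) z = s *: qbr m x z.
Proof. by rewrite /qbr -scalerAl -scalerAr scalerBr !scalerA mulrC. Qed.

Lemma qbrBr m x y z : qbr m x (y - z) = qbr m x y - qbr m x z.
Proof. by rewrite /qbr mulrBl mulrBr scalerBr subrACA. Qed.

Lemma qbrZr m s x y : qbr m x (s *: y) = s *: qbr m x y.
Proof. by rewrite /qbr -scalerAl -scalerAr scalerBr !scalerA mulrC. Qed.

(* [x, _] is a derivation, which gives the following commutator identities. *)
Lemma br_qbr_derivation m x y z :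
  x * z = z * x -> br x (qbr m y z) = qbr m (br x y) z.
Proof.
move=> hxz; rewrite /br /qbr mulrBr mulrBl -scalerAr -scalerAl !mulrA.
rewrite mulrBl mulrBr scalerBr !mulrA hxz -[y * z * x]mulrA -hxz mulrA.
by rewrite subrACA.
Qed.

Lemma br_qbr_l m x y : br x (qbr m x y) = qbr m x (br x y).
Proof.
rewrite /br /qbr mulrBr mulrBl -scalerAr -scalerAl !mulrA.
by rewrite mulrBl mulrBr scalerBr !mulrA subrACA.
Qed.

Lemma br_qbr_r m x y : br (qbr m x y) y = qbr m (br x y) y.
Proof.
rewrite /br /qbr mulrBr mulrBl -scalerAr -scalerAl !mulrA.
by rewrite mulrBl mulrBr scalerBr !mulrA subrACA.
Qed.

Lemma br_r_mulr p x y : p * x = x * p -> br x (y * p) = br x y * p.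
Proof. by move=> hp; rewrite /br mulrBl -mulrA hp !mulrA. Qed.

Lemma br_r_mull p x y : p * x = x * p -> br x (p * y) = p * br x y.
Proof. by move=> hp; rewrite /br mulrBr !mulrA hp. Qed.

Lemma br_l_mulr p y z : p * z = z * p -> br (y * p) z = br y z * p.
Proof. by move=> hp; rewrite /br mulrBl -mulrA hp !mulrA. Qed.
End QCommutators.

Section SeriesFacts.
Variable R : nzRingType.
Implicit Types (a f g s : ps R) (u x : R).

Lemma size_psinv_seq a n : size (psinv_seq a n) = n.+1.
Proof. by elim: n => //= n IH; rewrite size_rcons IH. Qed.

Lemma nth_psinv_seq a n k : (k <= n)%N -> nth 0 (psinv_seq a n) k = psinv a k.
Proof.
elim: n => [|n IH]; first by rewrite leqn0 => /eqP ->.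
rewrite leq_eqVlt => /orP [/eqP -> //| hk].
by rewrite /= nth_rcons size_psinv_seq hk IH.
Qed.

Lemma psinvS a n : psinv a n.+1 = - \sum_(k < n.+1) a (n.+1 - k)%N * psinv a k.
Proof.
rewrite /psinv /= nth_rcons size_psinv_seq ltnn eqxx; congr (- _).
by apply: eq_bigr => k _; rewrite nth_psinv_seq // -ltnS.
Qed.

Lemma psinv_geom a u :
  a 0%N = 1 -> a 1%N = - u -> (forall n, (1 < n)%N -> a n = 0) ->
  forall n, psinv a n = u ^+ n.
Proof.
move=> a0 a1 a_gt1; elim=> [|n IH]; first by rewrite expr0.
rewrite psinvS big_ord_recr /= subSnn a1 IH big1 ?add0r ?mulNr ?opprK ?exprS //.
move=> [i hi] _ /=; rewrite a_gt1 ?mul0r //.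
by rewrite subSn ?ltnS ?subn_gt0 // ltnW.
Qed.

Lemma psmulCl x g n : psmul (psC x) g n = x * g n.
Proof.
rewrite /psmul big_ord_recl /= subn0 big1 ?addr0 // => i _.
by rewrite /psC /= mul0r.
Qed.

Lemma psmulCr x f n : psmul f (psC x) n = f n * x.
Proof.
rewrite /psmul big_ord_recr /= subnn big1 ?add0r // => [[i hi]] _ /=.
by rewrite /psC; case: (n - i)%N (subn_gt0 i n) => [|m]; rewrite ?hi ?mulr0.
Qed.

Lemma psmul_geom s u f g :
  (forall n, s n = u ^+ n) -> g 0%N = f 0%N ->
  (forall n, g n.+1 = f n.+1 + u * g n) ->
  forall n, psmul s f n = g n.
Proof.
move=> hs g0 gS; elim=> [|n IH].
  by rewrite /psmul big_ord1 hs expr0 mul1r g0.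
rewrite gS -IH /psmul big_ord_recl subn0 hs expr0 mul1r mulr_sumr.
by congr (_ + _); apply: eq_bigr => i _; rewrite !hs exprS mulrA.
Qed.
End SeriesFacts.

Section Uqgl3.
Variables (K : fieldType) (A : algType K) (e : K -> K).
Variables (E1 E2 F1 F2 : A) (Q : K -> K -> K -> A).
Hypothesis qexp_e : is_qexp e.
Hypothesis rel : Uqgl3_rel e E1 E2 F1 F2 Q.

Local Notation q := (qq e).
Local Notation kap := (kappa e).

Lemma qexp0 : e 0 = 1.
Proof. by case: qexp_e. Qed.

Lemma qexpD x y : e (x + y) = e x * e y.
Proof. by case: qexp_e. Qed.

Lemma qexpN x : e (- x) = (e x)^-1.
Proof.
have hx : e x * e (- x) = 1 by rewrite -qexpD subrr qexp0.
have ex0 : e x != 0.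
  by apply/eqP => h0; move: hx; rewrite h0 mul0r => /eqP; rewrite eq_sym oner_eq0.
by rewrite -(mulKf ex0 (e (- x))) hx mulr1.
Qed.

Lemma q_neq0 : q != 0.
Proof.
apply/eqP => h0; have := qexpD 1 (-1).
by rewrite subrr qexp0 -/q h0 mul0r => /eqP; rewrite oner_eq0.
Qed.

Lemma qexpN1 : e (-1) = q^-1.
Proof. exact: qexpN. Qed.

Lemma qexp2 : e 2 = q ^+ 2.
Proof. by rewrite expr2 -qexpD. Qed.

Lemma qexpN2 : e (-2) = q^-2.
Proof. by rewrite qexpN qexp2. Qed.

Lemma qexpNN1 : e (-1 - 1) = q^-2.
Proof. by rewrite -opprD qexpN2. Qed.

Lemma QM x1 x2 x3 y1 y2 y3 :
  Q x1 x2 x3 * Q y1 y2 y3 = Q (x1 + y1) (x2 + y2) (x3 + y3).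
Proof. by case: rel => _ QD _ _ _; rewrite QD. Qed.

Lemma QNK x1 x2 x3 : Q (- x1) (- x2) (- x3) * Q x1 x2 x3 = 1.
Proof. by case: rel => Q0 _ _ _ _; rewrite QM !addNr. Qed.

Lemma qcomm_QE1 x1 x2 x3 : qcomm (e (x1 - x2)) (Q x1 x2 x3) E1.
Proof. by case: rel => _ _ /(_ x1 x2 x3) [h _ _ _] _ _; apply: qcomm_conj (QNK _ _ _) h. Qed.

Lemma qcomm_QE2 x1 x2 x3 : qcomm (e (x2 - x3)) (Q x1 x2 x3) E2.
Proof. by case: rel => _ _ /(_ x1 x2 x3) [_ h _ _] _ _; apply: qcomm_conj (QNK _ _ _) h. Qed.

Lemma qcomm_QF1 x1 x2 x3 : qcomm (e (- (x1 - x2))) (Q x1 x2 x3) F1.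
Proof. by case: rel => _ _ /(_ x1 x2 x3) [_ _ h _] _ _; apply: qcomm_conj (QNK _ _ _) h. Qed.

Lemma br_E1F1 : br E1 F1 = kap^-1 *: (Q 1 (-1) 0 - Q (-1) 1 0).
Proof. by case: rel => _ _ _ []. Qed.

Lemma br_E2F2 : br E2 F2 = kap^-1 *: (Q 0 1 (-1) - Q 0 (-1) 1).
Proof. by case: rel => _ _ _ []. Qed.

Lemma E2F1_comm : E2 * F1 = F1 * E2.
Proof. by case: rel => _ _ _ [_ _ _ /eqP]; rewrite subr_eq0 => /eqP. Qed.

Hypothesis q2_neq1 : q ^+ 2 != 1.

(* q^2 != 1 makes kappa invertible; all scalar identities below follow by field. *)
Lemma qq_sub1_neq0 : q * q - 1 != 0.
Proof. by rewrite subr_eq0 -expr2. Qed.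

Lemma kappa_neq0 : kap != 0.
Proof.
apply: contra qq_sub1_neq0 => /eqP kap0.
by rewrite -(mulfV q_neq0) -mulrBr -[_ - _]/kap kap0 mulr0.
Qed.

(* Since q^(-G_1-G_3) q-commutes
   with E_2, B_0 = [E_2, F_3] q^(-G_1-G_3); and [E_2, F_3] = F_1 q^(-H_2) because
   E_2 commutes with F_1 and [E_2, F_2] is the Cartan element of the second root. *)
Lemma B0E : B0 e E2 F1 F2 Q = F1 * Q (-1) (-1) 0.
Proof.
have RE2 : qcomm q (Q (-1) 0 (-1)) E2.
  by have := qcomm_QE2 (-1) 0 (-1); rewrite sub0r opprK.
have K2F1 : qcomm q (Q 0 1 (-1)) F1.
  by have := qcomm_QF1 0 1 (-1); rewrite sub0r opprK.
have K2'F1 : qcomm q^-1 (Q 0 (-1) 1) F1.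
  by have := qcomm_QF1 0 (-1) 1; rewrite sub0r !opprK qexpN1.
have br_E2F3 : br E2 (F3 e F1 F2) = F1 * Q 0 (-1) 1.
  rewrite [F3 _ _ _]/(qbr q F2 F1) br_qbr_derivation ?E2F1_comm // br_E2F2.
  rewrite qbrZl qbrBl (qbr_qcomm_r _ K2F1) (qbr_qcomm_r _ K2'F1) subrr scale0r sub0r.
  rewrite scalerN scalerA -scaleNr (_ : - _ = 1) ?scale1r //.
  by rewrite /kappa; field; rewrite ?q_neq0 ?qq_sub1_neq0.
rewrite /B0 -/q -[_ * Q (-1) 0 (-1) * E2]mulrA RE2 -scalerAr mulrA scalerA.
rewrite mulVf ?q_neq0 // scale1r -mulrBl -/(br E2 (F3 e F1 F2)) br_E2F3.
by rewrite -mulrA QM add0r addr0 addrN.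
Qed.

Hypothesis qint2_neq0 : qint2 e != 0.

(* P = q^(-G_1-G_2), M = q^(-2G_1), w = -q^-2 M is the ratio of the geometric
   series N'_11(-q^-2 zeta)^-1; Q 1 (-1) 0 and Q (-1) 1 0 are q^(+-H_1). *)
Local Notation P := (Q (-1) (-1) 0).
Local Notation M := (Q (-2) 0 0).
Local Notation X := (Xel e E1 E2 F1 F2 Q).
Local Notation w := ((- q^-2) *: M).

Lemma P_E1 : P * E1 = E1 * P.
Proof. by apply: qcomm1; have := qcomm_QE1 (-1) (-1) 0; rewrite subrr qexp0. Qed.

Lemma P_F1 : P * F1 = F1 * P.
Proof. by apply: qcomm1; have := qcomm_QF1 (-1) (-1) 0; rewrite subrr oppr0 qexp0. Qed.

Lemma P_M : P * M = M * P.
Proof. by rewrite !QM; congr Q; apply: addrC. Qed.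

Lemma M_E1 : qcomm (q^-2) M E1.
Proof. by have := qcomm_QE1 (-2) 0 0; rewrite subr0 qexpN2. Qed.

Lemma M_F1 : qcomm (q ^+ 2) M F1.
Proof. by have := qcomm_QF1 (-2) 0 0; rewrite subr0 opprK qexp2. Qed.

Lemma K1_E1 : qcomm (q ^+ 2) (Q 1 (-1) 0) E1.
Proof. by have := qcomm_QE1 1 (-1) 0; rewrite opprK qexp2. Qed.

Lemma K1'_E1 : qcomm (q^-2) (Q (-1) 1 0) E1.
Proof. by have := qcomm_QE1 (-1) 1 0; rewrite qexpNN1. Qed.

Lemma K1_F1 : qcomm (q^-2) (Q 1 (-1) 0) F1.
Proof. by have := qcomm_QF1 1 (-1) 0; rewrite opprK qexpN2. Qed.

Lemma K1'_F1 : qcomm (q ^+ 2) (Q (-1) 1 0) F1.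
Proof. by have := qcomm_QF1 (-1) 1 0; rewrite opprB opprK qexp2. Qed.

Lemma K1_P : Q 1 (-1) 0 * P = Q 0 (-2) 0.
Proof. by rewrite QM addrN addr0 -opprD. Qed.

Lemma K1'_P : Q (-1) 1 0 * P = M.
Proof. by rewrite QM addrN addr0 -opprD. Qed.

Lemma XE : X = qbr (q^-2) E1 F1 * P.
Proof.
rewrite /Xel /A0 B0E /qbr mulrBl -scalerAl mulrA.
by rewrite -[F1 * P * E1]mulrA P_E1 mulrA.
Qed.

Lemma br_E1X : br E1 X = (qint2 e * - q^-2) *: (E1 * M).
Proof.
rewrite XE br_r_mulr ?P_E1 // br_qbr_l br_E1F1 qbrZr qbrBr.
rewrite (qbr_qcomm_l _ K1_E1) (qbr_qcomm_l _ K1'_E1) mulVf ?expf_neq0 ?q_neq0 //.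
rewrite subrr scale0r sub0r scalerN scalerA -scaleNr -scalerAl -mulrA K1'_P.
by congr (_ *: _); rewrite /kappa /qint2; field; rewrite ?q_neq0 ?qq_sub1_neq0.
Qed.

Lemma br_XF1 : br X F1 = (qint2 e * - q^-2) *: (M * F1).
Proof.
rewrite XE br_l_mulr ?P_F1 // br_qbr_r br_E1F1 qbrZl qbrBl.
rewrite (qbr_qcomm_r _ K1_F1) (qbr_qcomm_r _ K1'_F1) subrr scale0r sub0r.
rewrite scalerN scalerA -scaleNr -scalerAl -mulrA K1'_P M_F1 scalerA.
by congr (_ *: _); rewrite /kappa /qint2; field; rewrite ?q_neq0 ?qq_sub1_neq0.
Qed.

Lemma M_X : M * X = X * M.
Proof.
have MP : qcomm 1 M P by rewrite /qcomm scale1r P_M.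
have := qcommM (qcomm_qbr (q^-2) M_E1 M_F1) MP.
by rewrite mulVf ?expf_neq0 ?q_neq0 // mulr1 -XE => /qcomm1.
Qed.

Lemma P_X : P * X = X * P.
Proof.
have P_comm x : P * x = x * P -> qcomm 1 P x by rewrite /qcomm scale1r.
have := qcommM (qcomm_qbr (q^-2) (P_comm _ P_E1) (P_comm _ P_F1)) (P_comm _ erefl).
by rewrite !mulr1 -XE => /qcomm1.
Qed.

Lemma w_E1 : qcomm (q^-2) w E1.
Proof. exact: qcommZ M_E1. Qed.

Lemma w_F1 : qcomm (q ^+ 2) w F1.
Proof. exact: qcommZ M_F1. Qed.

Lemma wX_X n : w ^+ n * X = X * w ^+ n.
Proof.
have wX : qcomm 1 w X by rewrite /qcomm scale1r -scalerAl -scalerAr M_X.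
by have := qcommX n wX; rewrite expr1n => /qcomm1.
Qed.

Lemma AkE n : Ak e E1 E2 F1 F2 Q n = E1 * w ^+ n.
Proof.
elim: n => [|n IH]; first by rewrite expr0 mulr1.
rewrite [LHS]/= IH -/(br (E1 * w ^+ n) X) br_l_mulr ?wX_X // br_E1X -scalerAl scalerA.
by rewrite mulKf // [w ^+ n.+1]exprS mulrA -scalerAr -scalerAl.
Qed.

Lemma BkE n : Bk e E1 E2 F1 F2 Q n = w ^+ n * (F1 * P).
Proof.
elim: n => [|n IH]; first by rewrite expr0 mul1r -B0E.
rewrite [LHS]/= IH -/(br X (w ^+ n * (F1 * P))) br_r_mull ?wX_X // br_r_mulr ?P_X // br_XF1.
rewrite -scalerAl scalerAr scalerA mulKf // -[M * F1 * P]mulrA.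
by rewrite [w ^+ n.+1]exprSr -mulrA -scalerAl.
Qed.

Lemma psinv_N'11 n : psinv (N'11 Q) n = M ^+ n.
Proof. by apply: psinv_geom => // -[|[|k]]. Qed.

Lemma psinv_N'11c n : psinv (pssubst (- q^-2) (N'11 Q)) n = w ^+ n.
Proof.
apply: psinv_geom => [||k]; rewrite /pssubst ?expr0 ?scale1r ?expr1 ?scalerN //.
by case: k => [|[|k]] //= _; rewrite scaler0.
Qed.

Lemma N''22_1 : N''22 e E1 F1 Q 1 = - Q 0 (-2) 0 - N'21 e E1 * N'12 e F1 Q.
Proof.
by rewrite /N''22 /psadd /psopp /psshift /= psmulCr psmulCl psinv_N'11 expr0 mulr1.
Qed.

Lemma N''22_SS k : N''22 e E1 F1 Q k.+2 = - (N'21 e E1 * M ^+ k.+1 * N'12 e F1 Q).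
Proof. by rewrite /N''22 /psadd /psopp /psshift /= psmulCr psmulCl psinv_N'11 add0r. Qed.

Local Notation Ep := (psadd (ps1 A) (psscale kap (E'alpha e E1 E2 F1 F2 Q))).

Lemma Ep0 : Ep 0%N = 1.
Proof. by rewrite /psadd /ps1 /psC /psscale /E'alpha /psshift scaler0 addr0. Qed.

Lemma EpS n : Ep n.+1 = kap *: qbr (q^-2) (Ak e E1 E2 F1 F2 Q n) (B0 e E2 F1 F2 Q).
Proof. by rewrite /psadd /ps1 /psC /psscale /E'alpha /psshift /Ealpha add0r. Qed.

(* The recursion characterising N'_11(-q^-2 zeta)^-1 N''_22(-q^-2 zeta), in
   degree one: both sides combine E_1 F_1 P and q^(-2G_2) - q^(-2G_1) = kappa
   [E_1, F_1] P. *)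
Lemma Ep1 : Ep 1 = pssubst (- q^-2) (N''22 e E1 F1 Q) 1 + w * Ep 0%N.
Proof.
rewrite EpS AkE expr0 mulr1 Ep0 mulr1 /pssubst expr1 N''22_1.
have -> : qbr (q^-2) E1 (B0 e E2 F1 F2 Q) = X by [].
rewrite XE qbr_br mulrDl -!scalerAl br_E1F1 -scalerAl mulrBl K1_P K1'_P.
rewrite scalerDr !scalerA /N'12 -!scalerAr mulrA !scalerA.
rewrite [in RHS]scalerDr [in RHS]addrAC -[in RHS]scalerDr [in RHS]addrC.
rewrite [E1 * (F1 * P)]mulrA scalerN scalerA -scaleNr (addrC (- _)).
rewrite -[Q 0 (-2) 0 - M]opprB scalerN -scaleNr.
by congr (_ *: _ + _ *: _); rewrite /kappa; field; rewrite ?q_neq0 ?qq_sub1_neq0.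
Qed.

Lemma P_wX n : P * w ^+ n = w ^+ n * P.
Proof. by apply: commrX; rewrite /GRing.comm -scalerAl -scalerAr P_M. Qed.

Lemma E1wF1 n : E1 * w ^+ n * (F1 * P) = (q ^+ 2) ^+ n *: (E1 * F1 * w ^+ n * P).
Proof.
by rewrite mulrA -[E1 * w ^+ n * F1]mulrA (qcommX n w_F1) -scalerAr -scalerAl !mulrA.
Qed.

Local Notation Y n := ((q ^+ 2) ^+ n *: (E1 * F1) - q^-2 *: (F1 * E1)).

Lemma EpSE n : Ep n.+1 = kap *: (Y n * w ^+ n * P).
Proof.
rewrite EpS AkE B0E /qbr E1wF1 -[F1 * P * _]mulrA [P * _]mulrA P_E1.
by rewrite -[E1 * P * _]mulrA P_wX !mulrA !mulrBl -!scalerAl.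
Qed.

Lemma w_Y n : w * Y n = Y n * w.
Proof.
apply: qcomm1; apply: qcommBZ.
  by have := qcommM w_E1 w_F1; rewrite mulVf ?expf_neq0 ?q_neq0.
by have := qcommM w_F1 w_E1; rewrite mulfV ?expf_neq0 ?q_neq0.
Qed.

(* The recursion in degree n + 2: both sides are multiples of E_1 F_1 w^(n+1) P. *)
Lemma EpSS n :
  Ep n.+2 = pssubst (- q^-2) (N''22 e E1 F1 Q) n.+2 + w * Ep n.+1.
Proof.
apply: (canRL (subrK _)); rewrite !EpSE -scalerAr !mulrA w_Y.
rewrite -[Y n * w * w ^+ n]mulrA -exprS -scalerBr -!mulrBl opprB subrKA -scalerBl.
rewrite /pssubst N''22_SS /N'21 /N'12 exprS.
rewrite [(- q^-2) ^+ n.+2]exprS -scalerA scalerN.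
rewrite [in RHS]scalerAl [in RHS]scalerAr -exprZn.
rewrite -[kap *: E1 * _]scalerAl -[kap *: (E1 * _) * _]scalerAl.
rewrite -[E1 * _ * (kap *: _)]scalerAr -[E1 * _ * (q *: _)]scalerAr E1wF1.
rewrite -[_ *: (E1 * F1) * _]scalerAl -[_ *: (E1 * F1 * _) * _]scalerAl.
rewrite !scalerN !scalerA -scaleNr.
by congr (_ *: _); rewrite /kappa !exprS; field; rewrite ?q_neq0 ?qq_sub1_neq0.
Qed.

Lemma EpS_rec n : Ep n.+1 = pssubst (- q^-2) (N''22 e E1 F1 Q) n.+1 + w * Ep n.
Proof. by case: n => [|n]; [exact: Ep1 | exact: EpSS]. Qed.

Lemma Ealpha_series n :
  Ealpha e E1 E2 F1 F2 Q n =
  psscale kap^-1 (psmul (psC (N'21 e E1)) (psinv (pssubst (- q^-2) (N'11 Q)))) n.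
Proof.
rewrite /Ealpha AkE /psscale psmulCl psinv_N'11c /N'21 -scalerAl scalerA.
by rewrite mulVf ?kappa_neq0 ?scale1r.
Qed.

Lemma Edeltaalpha_series n :
  Edeltaalpha e E1 E2 F1 F2 Q n =
  psscale (kap^-1 * q^-1)
    (psmul (psinv (pssubst (- q^-2) (N'11 Q))) (psC (N'12 e F1 Q))) n.
Proof.
rewrite /Edeltaalpha BkE /psscale psmulCr psinv_N'11c /N'12 -!scalerAr !scalerA.
by rewrite -mulrA [q^-1 * _]mulrCA mulVf ?q_neq0 // mulr1 mulVf ?kappa_neq0 ?scale1r.
Qed.

Lemma E'alpha_series n :
  Ep n = psmul (psinv (pssubst (- q^-2) (N'11 Q))) (pssubst (- q^-2) (N''22 e E1 F1 Q)) n.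
Proof.
apply/esym/psmul_geom => [m||m]; [exact: psinv_N'11c | | exact: EpS_rec].
by rewrite Ep0 /pssubst expr0 scale1r /N''22 /psadd /psopp /= oppr0 addr0.
Qed.
End Uqgl3.

Theorem mainTheorem5 (K : fieldType) (A : algType K) (e : K -> K)
    (E1 E2 F1 F2 : A) (Q : K -> K -> K -> A) :
  is_qexp e ->
  qq e ^+ 2 != 1 ->
  qint2 e != 0 ->
  Uqgl3_rel e E1 E2 F1 F2 Q ->
  let c := - (qq e)^-2 in
  [/\ B0 e E2 F1 F2 Q = F1 * Q (-1) (-1) 0,
      (forall n, Ealpha e E1 E2 F1 F2 Q n =
         psscale (kappa e)^-1
           (psmul (psC (N'21 e E1)) (psinv (pssubst c (N'11 Q)))) n),
      (forall n, Edeltaalpha e E1 E2 F1 F2 Q n =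
         psscale ((kappa e)^-1 * (qq e)^-1)
           (psmul (psinv (pssubst c (N'11 Q))) (psC (N'12 e F1 Q))) n) &
      (forall n,
         psadd (ps1 A) (psscale (kappa e) (E'alpha e E1 E2 F1 F2 Q)) n =
         psmul (psinv (pssubst c (N'11 Q)))
               (pssubst c (N''22 e E1 F1 Q)) n)].
Proof.
move=> qexp_e q2_neq1 qint2_neq0 rel c; split.
- exact: B0E qexp_e rel q2_neq1.
- exact: Ealpha_series qexp_e rel q2_neq1 qint2_neq0.
- exact: Edeltaalpha_series qexp_e rel q2_neq1 qint2_neq0.
- exact: E'alpha_series qexp_e rel q2_neq1 qint2_neq0.
Qed.
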